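(* Let $S\subset\mathbb{R}^n$ and $U_0\subset\mathbb{R}^{n\times n}$ be polyhedra and let $A_\star\in U_0$. If one-step safe learning is possible, then it is possible with at most $n$ measurements (i.e., with $m\le n$ in the definition below).
   Context: System: $x_{t+1}=A_\star x_t$ with $A_\star$ unknown, $A_\star\in U_0$. Given measurements $(x_j,y_j)$, $j=1,\dots,k$, with $y_j=A_\star x_j$, let $U_k=\{A\in U_0\mid Ax_j=y_j,\ j=1,\dots,k\}$. One-step safe learning is possible if for some nonnegative integer $m$ one can sequentially choose vectors $x_k\in S$, $k=1,\dots,m$ (each choice may depend on previous observations), observing $y_k=A_\star x_k$ after each choice, such that (1) for $k=1,\dots,m$, $Ax_k\in S$ for all $A\in U_{k-1}$, and (2) $U_m$ is a singleton. *)

From mathcomp Require Import all_boot all_order all_algebra.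
From mathcomp Require Import reals.
Set Implicit Arguments. Unset Strict Implicit. Unset Printing Implicit Defensive.
Import Order.TTheory GRing.Theory Num.Theory.
Local Open Scope ring_scope.

Section SafeLearning.
Variable R : realType.

(* Vectors of R^n are column vectors 'cV_n = 'M_(n,1). *)
Definition is_polyhedron (p q : nat) (P : 'M[R]_(p, q) -> Prop) : Prop :=
  exists (k : nat) (C : 'I_k -> 'M[R]_(p, q)) (d : 'I_k -> R),
    forall A, P A <-> (forall i : 'I_k, \sum_(j < p) \sum_(l < q) C i j l * A j l <= d i).

Definition history (n : nat) := seq ('cV[R]_n * 'cV[R]_n).

Definition consistent (n : nat) (U0 : 'M[R]_n -> Prop) (h : history n) (A : 'M[R]_n) : Prop :=
  U0 A /\ (forall xy, xy \in h -> A *m xy.1 = xy.2).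

Definition strategy (n : nat) := history n -> 'cV[R]_n.

Fixpoint run (n : nat) (strat : strategy n) (Astar : 'M[R]_n) (k : nat) : history n :=
  match k with
  | 0 => [::]
  | k'.+1 => let h := run strat Astar k' in
             let x := strat h in rcons h (x, Astar *m x)
  end.

Definition safe_learning_with (n : nat) (S : 'cV[R]_n -> Prop) (U0 : 'M[R]_n -> Prop)
    (Astar : 'M[R]_n) (m : nat) : Prop :=
  exists strat : strategy n,
    (forall k : nat, (k < m)%N ->
        S (strat (run strat Astar k)) /\
        (forall A, consistent U0 (run strat Astar k) A ->
                   S (A *m strat (run strat Astar k)))) /\
    (exists A0 : 'M[R]_n, forall A, consistent U0 (run strat Astar m) A <-> A = A0).

Definition safe_learning_possible (n : nat) (S : 'cV[R]_n -> Prop) (U0 : 'M[R]_n -> Prop)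
    (Astar : 'M[R]_n) : Prop :=
  exists m : nat, safe_learning_with S U0 Astar m.

End SafeLearning.

(* Whether a matrix is consistent with a history of exact measurements of
   [Astar] depends only on the span of the queried vectors.  Hence, from a
   successful strategy, keep only the queries that are linearly independent of
   the earlier kept ones: at most [n] remain, each of them was safe for an
   uncertainty set with the same span of past queries, and the final
   uncertainty set is unchanged. *)
From mathcomp Require Import all_boot all_order all_algebra.
From mathcomp Require Import reals.
Set Implicit Arguments. Unset Strict Implicit. Unset Printing Implicit Defensive.
Import GRing.Theory.
Local Open Scope ring_scope.

Lemma iotaSr (k : nat) : iota 0 k.+1 = rcons (iota 0 k) k.
Proof. by rewrite -cats1 -addn1 iotaD. Qed.

Section GreedyBasis.
Variables (K : fieldType) (vT : vectType K).
Implicit Types (L : seq vT) (g : nat -> vT).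

Lemma span_rcons L v : (<<rcons L v>> = <[v]> + <<L>>)%VS.
Proof. by rewrite -span_cons; apply: eq_span => u; rewrite mem_rcons. Qed.

Lemma free_rcons L v : free (rcons L v) = (v \notin <<L>>)%VS && free L.
Proof. by rewrite -free_cons; apply/perm_free; rewrite perm_rcons. Qed.

Lemma size_free L : free L -> (size L <= \dim {:vT})%N.
Proof. by move/eqP <-; exact/dimvS/subvf. Qed.

Fixpoint greedy_basis g k : seq vT :=
  if k is k'.+1 then
    let L := greedy_basis g k' in
    if g k' \in <<L>>%VS then L else rcons L (g k')
  else [::].

Lemma span_greedy_basis g k :
  (<<greedy_basis g k>> = <<[seq g i | i <- iota 0 k]>>)%VS.
Proof.
elim: k => // k IHk; rewrite iotaSr map_rcons span_rcons -IHk /=.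
by case: ifPn => [gk_in | _]; [apply/esym/addv_idPr; rewrite -memvE | rewrite span_rcons].
Qed.

Lemma free_greedy_basis g k : free (greedy_basis g k).
Proof.
elim: k => [|k IHk] /=; first exact: nil_free.
by case: ifPn => // gk_notin; rewrite free_rcons gk_notin.
Qed.

Lemma greedy_basis_prefix g k j : (j < size (greedy_basis g k))%N ->
  exists k', [/\ (k' < k)%N, nth 0 (greedy_basis g k) j = g k'
               & take j (greedy_basis g k) = greedy_basis g k'].
Proof.
elim: k => //= k IHk; set L := greedy_basis g k.
have IHk' (lt_jL : (j < size L)%N) :
    exists k', [/\ (k' < k.+1)%N, nth 0 L j = g k' & take j L = greedy_basis g k'].
  by have [k' [lt_k'k ? ?]] := IHk lt_jL; exists k'; split=> //; exact: ltnW.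
case: ifP => _; first exact: IHk'.
rewrite size_rcons ltnS leq_eqVlt => /predU1P[-> | lt_jL].
  by exists k; rewrite nth_rcons ltnn eqxx -cats1 take_size_cat.
have [k' [? nthE takeE]] := IHk' lt_jL; exists k'.
by rewrite nth_rcons lt_jL -cats1 takel_cat // ltnW.
Qed.

End GreedyBasis.

Lemma eq_span_mulmx (K : fieldType) (n : nat) (A B : 'M[K]_n)
    (L1 L2 : seq 'cV[K]_n) : (<<L1>> = <<L2>>)%VS ->
  {in L1, forall v, A *m v = B *m v} <-> {in L2, forall v, A *m v = B *m v}.
Proof.
have agreeE L : {in L, forall v, A *m v = B *m v} <->
    {in <<L>>%VS, linfun (mulmx A) =1 linfun (mulmx B)}.
  rewrite span_lfunP; split=> AB v /AB; by rewrite !lfunE.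
by move=> eqL; rewrite !agreeE eqL.
Qed.

Section Histories.
Variables (R : realType) (n : nat).
Implicit Types (L : seq 'cV[R]_n) (A B : 'M[R]_n) (strat : strategy R n).

Definition observe B L : history R n := [seq (v, B *m v) | v <- L].

Definition replay L : strategy R n := fun h => nth 0 L (size h).

Lemma size_run strat B k : size (run strat B k) = k.
Proof. by elim: k => //= k IHk; rewrite size_rcons IHk. Qed.

Lemma run_observe strat B k :
  run strat B k = observe B [seq strat (run strat B i) | i <- iota 0 k].
Proof.
by elim: k => // k IHk; rewrite [LHS]/= IHk /observe iotaSr !map_rcons IHk.
Qed.

Lemma run_replay L B j : (j <= size L)%N ->
  run (replay L) B j = observe B (take j L).
Proof.
move=> le_jL; rewrite run_observe -(map_nth_iota0 0 le_jL).
by congr observe; apply: eq_map => i; rewrite /replay size_run.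
Qed.

Lemma consistent_observe (U0 : 'M[R]_n -> Prop) B L A :
  consistent U0 (observe B L) A <-> U0 A /\ {in L, forall v, A *m v = B *m v}.
Proof.
split=> -[U0A AB]; split=> //.
- by move=> v Lv; exact: (AB (v, B *m v) (map_f _ Lv)).
- by move=> _ /mapP[v Lv ->]; exact: AB.
Qed.

Lemma eq_span_consistent (U0 : 'M[R]_n -> Prop) B L1 L2 A :
  (<<L1>> = <<L2>>)%VS ->
  consistent U0 (observe B L1) A <-> consistent U0 (observe B L2) A.
Proof.
move=> /(eq_span_mulmx A B) eqL.
by rewrite !consistent_observe; split=> -[U0A /eqL AB].
Qed.

End Histories.

Theorem corollary8 (R : realType) (n : nat)
    (S : 'cV[R]_n -> Prop) (U0 : 'M[R]_n -> Prop) (Astar : 'M[R]_n) :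
  is_polyhedron S -> is_polyhedron U0 -> U0 Astar ->
  safe_learning_possible S U0 Astar ->
  exists m : nat, (m <= n)%N /\ safe_learning_with S U0 Astar m.
Proof.
move=> _ _ _ [m [strat [safe [A0 learned]]]].
pose g i := strat (run strat Astar i).
pose L := greedy_basis g m.
have consistent_greedy k A : consistent U0 (observe Astar (greedy_basis g k)) A <->
    consistent U0 (run strat Astar k) A.
  by rewrite run_observe; apply/eq_span_consistent/span_greedy_basis.
exists (size L); split.
  by have := size_free (free_greedy_basis g m); rewrite dimvf dim_matrix mulr1.
exists (replay L); split.
  move=> j lt_jL; have [k [lt_km nthE takeE]] := greedy_basis_prefix lt_jL.
  have [Sgk safe_gk] := safe k lt_km.
  rewrite /replay size_run nthE (run_replay _ (ltnW lt_jL)) takeE; split=> // A.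
  by rewrite consistent_greedy; exact: safe_gk.
by exists A0 => A; rewrite run_replay // take_size consistent_greedy; exact: learned.
Qed.
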